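(* Let $G$ be a finite group acting on a weighted simplicial complex $\Omega$ on $[n]$. Then there exist a weighted simplicial complex $\Omega'$ on $[n]$, obtained from $\Omega$ by increasing the weights of the facets (i.e. $\Omega'(S)=\Omega(S)$ for every $S$ that is not a facet of $\Omega$, $\Omega'$ has the same facets as $\Omega$, and $\Omega'(F)\geq\Omega(F)$ for each facet $F$), and an action of $G$ on $\Omega'$ which is free, whose action on $[n]$ is the given one, and which refines the given action, in the sense that there is a $G$-linear map $\tilde c\colon \widetilde{\mathcal F}(\Omega')\to\widetilde{\mathcal F}(\Omega)$ with $c\circ\tilde c=c'$, where $c,c'$ are the collapse maps of $\Omega,\Omega'$.
   Context: Write $[n]=\{0,\ldots,n\}$ and $\mathcal P_n$ for its power set. A weighted simplicial complex (wsc) on $[n]$ is a function $\Omega\colon\mathcal P_n\to\mathbb N=\{0,1,2,\ldots\}$ such that $S_1\subseteq S_2$ implies that $\Omega(S_1)$ divides $\Omega(S_2)$. A set $S$ with $\Omega(S)\neq0$ is a simplex; it is assumed that every singleton is a simplex. A facet is a simplex maximal under inclusion; $\mathcal F$ is the set of facets. The multiset $\widetilde{\mathcal F}=\widetilde{\mathcal F}(\Omega)$ contains each facet $F$ exactly $\Omega(F)$ times, and the collapse map $c\colon\widetilde{\mathcal F}\to\mathcal F$ sends each copy to the underlying facet. A map $f\colon X\to Y$ between $G$-sets is $G$-linear if $f(gx)=gf(x)$. A group action of $G$ on the wsc $\Omega$ consists of an action of $G$ on $[n]$ such that $\Omega(gS)=\Omega(S)$ for all $S\in\mathcal P_n$,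 $g\in G$ (this induces an action on $\mathcal F$), together with an action of $G$ on $\widetilde{\mathcal F}$ such that the collapse map $c$ is $G$-linear. The action on $\Omega$ is free if the action of $G$ on $\widetilde{\mathcal F}$ is free (every element of $\widetilde{\mathcal F}$ has trivial stabiliser). *)

From mathcomp Require Import all_boot all_order all_fingroup.
Set Implicit Arguments. Unset Strict Implicit. Unset Printing Implicit Defensive.

(* [n] = {0,...,n} is the ordinal type 'I_n.+1; P_n is {set 'I_n.+1}.
   A weight function is a map {set 'I_n.+1} -> nat. *)
Section WSC.
Variable n : nat.
Notation V := 'I_n.+1.

Definition is_wsc (Om : {set V} -> nat) : Prop :=
  (forall S1 S2 : {set V}, S1 \subset S2 -> Om S1 %| Om S2) /\
  (forall i : V, Om [set i] != 0).

Definition simplex (Om : {set V} -> nat) (S : {set V}) : bool := Om S != 0.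

Definition facet (Om : {set V} -> nat) (S : {set V}) : bool :=
  simplex Om S && [forall T : {set V}, (S \proper T) ==> ~~ simplex Om T].

(* The multiset \tilde F(Om): the facet F appears Om F times, as the pairs
   (F, k) with k < Om F. *)
Definition Ftilde (Om : {set V} -> nat) : Type :=
  {p : {set V} * nat | facet Om p.1 && (p.2 < Om p.1)}.

Definition collapse (Om : {set V} -> nat) (x : Ftilde Om) : {set V} :=
  (val x).1.
End WSC.

Definition is_gaction (gT : finGroupType) (X : Type) (a : gT -> X -> X) : Prop :=
  (forall x, a 1%g x = x) /\ (forall g h x, a (g * h)%g x = a g (a h x)).

Definition wsc_action (n : nat) (gT : finGroupType) (Om : {set 'I_n.+1} -> nat)
    (alpha : gT -> 'I_n.+1 -> 'I_n.+1) (beta : gT -> Ftilde Om -> Ftilde Om) : Prop :=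
  [/\ is_gaction alpha,
      (forall g (S : {set 'I_n.+1}), Om (alpha g @: S) = Om S),
      is_gaction beta &
      (forall g x, collapse (beta g x) = alpha g @: collapse x)].

Definition free_action (gT : finGroupType) (X : Type) (beta : gT -> X -> X) : Prop :=
  forall g x, beta g x = x -> g = 1%g.

Arguments is_wsc {n} Om.
Arguments wsc_action {n gT} Om alpha beta.
Arguments free_action {gT X} beta.
Arguments collapse {n Om} x.

From mathcomp Require Import all_boot all_order all_fingroup.

Set Implicit Arguments. Unset Strict Implicit. Unset Printing Implicit Defensive.

(* Multiply the weight of every facet by |G|.  The copies of a facet F in the
   new complex are then the pairs (copy of F in Omega, element of G), i.e.
   Ftilde(Omega') = Ftilde(Omega) x G, and G acts diagonally: by the given
   action on the first factor and by left multiplication on the second.  The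
   second factor makes the action free, and the first projection is the
   required G-linear map over the collapse maps. *)

Lemma imsetK (T : finType) (f g : T -> T) :
  cancel f g -> forall A : {set T}, g @: (f @: A) = A.
Proof. by move=> fK A; rewrite -imset_comp (eq_imset _ fK) imset_id. Qed.

Section Facets.
Variables (n : nat) (Om : {set 'I_n.+1} -> nat).

Lemma facet_proper_eq0 (F T : {set 'I_n.+1}) :
  facet Om F -> F \proper T -> Om T = 0.
Proof.
by case/andP=> _ /forallP/(_ T)/implyP F_max /F_max; rewrite negbK => /eqP.
Qed.

Lemma facet_imset (f f' : 'I_n.+1 -> 'I_n.+1) :
    cancel f f' -> cancel f' f ->
    (forall S : {set 'I_n.+1}, Om (f @: S) = Om S) ->
  forall S : {set 'I_n.+1}, facet Om (f @: S) = facet Om S.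
Proof.
move=> fK f'K Om_f S; rewrite /facet /simplex Om_f; congr (_ && _).
apply/forallP/forallP => maxS T; apply/implyP => pST.
  rewrite -Om_f; apply: (implyP (maxS _)).
  exact: imset_proper (in2W (can_inj fK)) pST.
rewrite -(imsetK f'K T) Om_f; apply: (implyP (maxS _)).
by rewrite -(imsetK fK S); apply: imset_proper (in2W (can_inj f'K)) pST.
Qed.

End Facets.

Section ScaleFacets.
Variables (n : nat) (Om : {set 'I_n.+1} -> nat).

Definition scale_facets (c : nat) (S : {set 'I_n.+1}) : nat :=
  if facet Om S then Om S * c else Om S.

Lemma scale_facets_facet c F : facet Om F -> scale_facets c F = Om F * c.
Proof. by rewrite /scale_facets => ->. Qed.

Lemma scale_facets_nonfacet c S : ~~ facet Om S -> scale_facets c S = Om S.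
Proof. by rewrite /scale_facets => /negbTE ->. Qed.

Lemma scale_facets_eq0 c S : Om S = 0 -> scale_facets c S = 0.
Proof. by rewrite /scale_facets => ->; case: ifP. Qed.

Lemma dvdn_scale_facets c S : Om S %| scale_facets c S.
Proof. by rewrite /scale_facets; case: ifP => _; rewrite ?dvdn_mulr. Qed.

Lemma leq_scale_facets c S : 0 < c -> Om S <= scale_facets c S.
Proof. by move=> c_gt0; rewrite /scale_facets; case: ifP; rewrite ?leq_pmulr. Qed.

Lemma simplex_scale_facets c S : 0 < c -> simplex (scale_facets c) S = simplex Om S.
Proof.
move=> c_gt0; rewrite /simplex /scale_facets; case: ifP => // _.
by rewrite muln_eq0 (negbTE (lt0n_neq0 c_gt0)) orbF.
Qed.

Lemma facet_scale_facets c S : 0 < c -> facet (scale_facets c) S = facet Om S.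
Proof.
move=> c_gt0; rewrite /facet simplex_scale_facets //; congr (_ && _).
by apply: eq_forallb => T; rewrite simplex_scale_facets.
Qed.

Lemma is_wsc_scale_facets c : 0 < c -> is_wsc Om -> is_wsc (scale_facets c).
Proof.
move=> c_gt0 [Om_dvd Om_pt]; split => [S1 S2 sS12 | i].
  have [S1_facet | S1_nonfacet] := boolP (facet Om S1).
    have [<- // | pS12] := eqVproper sS12.
    by rewrite (scale_facets_eq0 _ (facet_proper_eq0 S1_facet pS12)) dvdn0.
  rewrite scale_facets_nonfacet //.
  exact: dvdn_trans (Om_dvd _ _ sS12) (dvdn_scale_facets c S2).
by have := simplex_scale_facets [set i] c_gt0; rewrite /simplex => ->.
Qed.

End ScaleFacets.

Section FtildeScaleFacets.
Variables (n : nat) (Om : {set 'I_n.+1} -> nat) (I : finType).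
Hypothesis I_gt0 : 0 < #|I|.

Local Notation Om' := (scale_facets Om #|I|).

Lemma ft_join_subproof (x : Ftilde Om) (i : I) :
  facet Om' (val x).1 && ((val x).2 * #|I| + enum_rank i < Om' (val x).1).
Proof.
case: x => [[F k]] /= /andP[F_facet k_lt].
rewrite facet_scale_facets // F_facet scale_facets_facet //=.
apply: (@leq_trans (k * #|I| + #|I|)); first by rewrite ltn_add2l ltn_ord.
by rewrite -mulSnr leq_mul2r k_lt orbT.
Qed.

Definition ft_join (x : Ftilde Om) (i : I) : Ftilde Om' :=
  exist _ ((val x).1, (val x).2 * #|I| + enum_rank i) (ft_join_subproof x i).

Lemma ft_base_subproof (y : Ftilde Om') :
  facet Om (val y).1 && ((val y).2 %/ #|I| < Om (val y).1).
Proof.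
case: y => [[F k]] /= /andP[F_facet k_lt].
rewrite facet_scale_facets // in F_facet.
by rewrite F_facet ltn_divLR // -scale_facets_facet.
Qed.

Definition ft_base (y : Ftilde Om') : Ftilde Om :=
  exist _ ((val y).1, (val y).2 %/ #|I|) (ft_base_subproof y).

Definition ft_label (y : Ftilde Om') : I :=
  enum_val (Ordinal (ltn_pmod (val y).2 I_gt0)).

Lemma ft_base_join x i : ft_base (ft_join x i) = x.
Proof.
apply: val_inj; case: x => [[F k]] /= _.
by rewrite divnMDl // divn_small ?addn0.
Qed.

Lemma ft_label_join x i : ft_label (ft_join x i) = i.
Proof.
rewrite /ft_label -[RHS]enum_rankK; congr enum_val; apply: val_inj => /=.
by rewrite modnMDl modn_small.
Qed.

Lemma ft_join_base_label y : ft_join (ft_base y) (ft_label y) = y.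
Proof. by apply: val_inj; case: y => [[F k] ?] /=; rewrite enum_valK -divn_eq. Qed.

End FtildeScaleFacets.

Lemma card_finGroup_gt0 (gT : finGroupType) : 0 < #|gT|.
Proof. by rewrite -cardsT cardG_gt0. Qed.

Section FreeLift.
Variables (n : nat) (gT : finGroupType) (Om : {set 'I_n.+1} -> nat).
Variables (alpha : gT -> 'I_n.+1 -> 'I_n.+1) (beta : gT -> Ftilde Om -> Ftilde Om).

Local Notation gT_gt0 := (card_finGroup_gt0 gT).
Local Notation Om' := (scale_facets Om #|gT|).

Definition free_lift (g : gT) (y : Ftilde Om') : Ftilde Om' :=
  ft_join gT_gt0 (beta g (ft_base gT_gt0 y)) (g * ft_label gT_gt0 y)%g.

Lemma ft_base_free_lift g y :
  ft_base gT_gt0 (free_lift g y) = beta g (ft_base gT_gt0 y).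
Proof. exact: ft_base_join. Qed.

Lemma free_action_free_lift : free_action free_lift.
Proof.
move=> g y /(congr1 (ft_label gT_gt0)); rewrite ft_label_join.
by move/(canRL (mulgK _)); rewrite mulgV.
Qed.

Lemma wsc_action_free_lift :
  wsc_action Om alpha beta -> wsc_action Om' alpha free_lift.
Proof.
move=> [[alpha1 alphaM] Om_alpha [beta1 betaM] collapse_beta].
have alphaK g : cancel (alpha g) (alpha g^-1%g).
  by move=> i; rewrite -alphaM mulVg alpha1.
have alphaVK g : cancel (alpha g^-1%g) (alpha g).
  by move=> i; rewrite -alphaM mulgV alpha1.
split => //.
- move=> g S; rewrite /scale_facets Om_alpha.
  by rewrite (facet_imset (alphaK g) (alphaVK g) (Om_alpha g)).
- split=> [y | g h y]; rewrite /free_lift.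
    by rewrite beta1 mul1g ft_join_base_label.
  by rewrite ft_base_join ft_label_join betaM mulgA.
- by move=> g y; apply: collapse_beta.
Qed.

End FreeLift.

Theorem proposition2p7 (n : nat) (gT : finGroupType)
    (Om : {set 'I_n.+1} -> nat) (alpha : gT -> 'I_n.+1 -> 'I_n.+1)
    (beta : gT -> Ftilde Om -> Ftilde Om) :
  is_wsc Om -> wsc_action Om alpha beta ->
  exists Om' : {set 'I_n.+1} -> nat,
    [/\ is_wsc Om',
        (forall S : {set 'I_n.+1}, ~~ facet Om S -> Om' S = Om S),
        (forall S : {set 'I_n.+1}, facet Om' S = facet Om S),
        (forall F : {set 'I_n.+1}, facet Om F -> Om F <= Om' F) &
        exists beta' : gT -> Ftilde Om' -> Ftilde Om',
          [/\ wsc_action Om' alpha beta',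
              free_action beta' &
              exists ct : Ftilde Om' -> Ftilde Om,
                (forall g x, ct (beta' g x) = beta g (ct x)) /\
                (forall x, collapse (ct x) = collapse x)]].
Proof.
move=> Om_wsc act; pose gT_gt0 := card_finGroup_gt0 gT.
exists (scale_facets Om #|gT|); split.
- exact: is_wsc_scale_facets.
- exact: scale_facets_nonfacet.
- by move=> S; apply: facet_scale_facets.
- by move=> F _; apply: leq_scale_facets.
exists (free_lift beta); split.
- exact: wsc_action_free_lift.
- exact: free_action_free_lift.
exists (ft_base gT_gt0); split=> // g y.
exact: ft_base_free_lift.
Qed.
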